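(* Let $0<\varpi<2$, $0\le\beta_s\le1$ and $\epsilon>0$. Let $X$ be binary with distribution $(p,1-p)$, $p\in[0,1/2]$, and $Y$ the output of the binary symmetric channel $p(y\mid x)=\begin{pmatrix}1-\beta_s&\beta_s\\ \beta_s&1-\beta_s\end{pmatrix}$. Consider $$\max_{p\in[0,1/2]} I(X;Y)\quad\text{subject to}\quad L(\varpi,X)-L(\varpi,X\mid Y)\le\epsilon.$$ Let $C_{\beta_s}=e^{\varpi/2}-\big(\beta_s e^{\varpi(1-\beta_s)}+(1-\beta_s)e^{\varpi\beta_s}\big)$. Then the optimal value equals $1-H(\beta_s)$ if $\epsilon\ge C_{\beta_s}$, and equals $H\big(p_s(1-\beta_s)+(1-p_s)\beta_s\big)-H(\beta_s)$ if $0<\epsilon\le C_{\beta_s}$, where $p_s\in[0,1/2]$ is the solution of $L(\varpi,X)-L(\varpi,X\mid Y)=\epsilon$ (viewed as an equation in $p$).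
   Context: MIM: $L(\varpi,X)=\sum_i p(x_i)e^{\varpi(1-p(x_i))}$. CMIM: $L(\varpi,X\mid Y)=\sum_{j:\,p(y_j)>0}p(y_j)\sum_i p(x_i\mid y_j)e^{\varpi(1-p(x_i\mid y_j))}$, where the joint law is $p(x_i)p(y_j\mid x_i)$ and $p(x_i\mid y_j)=p(x_i)p(y_j\mid x_i)/p(y_j)$. $I(X;Y)=\sum_{i,j}p(x_i)p(y_j\mid x_i)\log_2\frac{p(y_j\mid x_i)}{p(y_j)}$ is the mutual information in bits, and $H(q)=-q\log_2 q-(1-q)\log_2(1-q)$ is the binary entropy function. *)

From Stdlib Require Import Reals Lra.
Open Scope R_scope.

(* log base 2. Note Stdlib's ln x = 0 for x <= 0, and all uses below are
   multiplied by a weight that vanishes in that case, giving 0 log 0 = 0. *)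
Definition log2 (x : R) : R := ln x / ln 2.

(* Binary X with distribution (p, 1-p): true ~ x_1 (prob p), false ~ x_2. *)
Definition px (p : R) (x : bool) : R := if x then p else 1 - p.

Definition bsc (b : R) (x y : bool) : R := if Bool.eqb x y then 1 - b else b.

Definition py (p b : R) (y : bool) : R :=
  px p true * bsc b true y + px p false * bsc b false y.

Definition pxy (p b : R) (x y : bool) : R := px p x * bsc b x y / py p b y.

Definition mim_term (w q : R) : R := q * exp (w * (1 - q)).

Definition MIM (w p : R) : R := mim_term w (px p true) + mim_term w (px p false).

Definition CMIM_term (w p b : R) (y : bool) : R :=
  if Rlt_dec 0 (py p b y)
  then py p b y * (mim_term w (pxy p b true y) + mim_term w (pxy p b false y))
  else 0.

Definition CMIM (w p b : R) : R := CMIM_term w p b true + CMIM_term w p b false.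

Definition leak (w p b : R) : R := MIM w p - CMIM w p b.

Definition MI_term (p b : R) (x y : bool) : R :=
  px p x * bsc b x y * log2 (bsc b x y / py p b y).

Definition MI (p b : R) : R :=
  MI_term p b true true + MI_term p b true false
  + MI_term p b false true + MI_term p b false false.

Definition Hb (q : R) : R := - q * log2 q - (1 - q) * log2 (1 - q).

Definition C_beta (w b : R) : R :=
  exp (w / 2) - (b * exp (w * (1 - b)) + (1 - b) * exp (w * b)).

Definition is_opt_value (w b eps v : R) : Prop :=
  (exists p, 0 <= p <= 1/2 /\ leak w p b <= eps /\ MI p b = v) /\
  (forall p, 0 <= p <= 1/2 -> leak w p b <= eps -> MI p b <= v).

From Stdlib Require Import Reals Lra Psatz.
From Coquelicot Require Import Coquelicot.
Open Scope R_scope.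

(* Write [q = p (1 - b) + (1 - p) b] for the law of [Y] and [mimb t] for the MIM of a binary
   law [(t, 1 - t)].  Then [I(X;Y) = H q - H b], and the leakage is
   [mimb p - q mimb x - (1 - q) mimb y] with [x], [y] the posteriors of [x_1] given [y_1],
   [y_2].  Both are invariant under [b <-> 1 - b]; for [b < 1/2], [q] increases to [1/2] with
   [p], hence so does [I(X;Y)], and everything rests on the leakage being strictly increasing
   on [[0, 1/2]], from [0] at [p = 0] to [C_beta] at [p = 1/2].  The optimum is thus attained
   at the largest feasible [p]: [1/2] if [eps >= C_beta], the root [p_s] otherwise.

   For the monotonicity, write the derivative of the leakage as a function of [p, x, y].  It
   vanishes at [x = y = p], and it increases when [x], [y] move to the true posteriors along
   the posteriors for the likelihood ratios [m], [1/m], [1 <= m <= (1 - b)/b]: this comes down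
   to [mimb''^2 (t (1 - t))^3] increasing on [[0, 1/2]], and finally to [tanh z <= z]. *)

Lemma strict_incr_of_derive (f f' : R -> R) (a c : R) :
  (forall x, a <= x <= c -> is_derive f x (f' x)) ->
  (forall x, a < x < c -> 0 < f' x) ->
  forall x y, a <= x -> x < y -> y <= c -> f x < f y.
Proof.
  intros Df Pf x y hx hxy hy.
  destruct (MVT_cor2 f f' x y hxy) as [z [Hz Hzxy]].
  { intros z hz. apply is_derive_Reals, Df. lra. }
  assert (0 < f' z) by (apply Pf; lra). nra.
Qed.

Lemma incr_of_derive (f f' : R -> R) (a c : R) :
  (forall x, a <= x <= c -> is_derive f x (f' x)) ->
  (forall x, a < x < c -> 0 <= f' x) ->
  forall x y, a <= x -> x <= y -> y <= c -> f x <= f y.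
Proof.
  intros Df Pf x y hx hxy hy.
  destruct (Req_dec x y) as [->|hne]; [lra|].
  destruct (MVT_cor2 f f' x y) as [z [Hz Hzxy]]; [lra| |].
  { intros z hz. apply is_derive_Reals, Df. lra. }
  assert (0 <= f' z) by (apply Pf; lra). nra.
Qed.

Lemma ivt_of_derive (f f' : R -> R) (a c y : R) : a <= c ->
  (forall x, a <= x <= c -> is_derive f x (f' x)) ->
  f a <= y <= f c -> exists x, a <= x <= c /\ f x = y.
Proof.
  intros hac Df hy.
  destruct (Req_dec (f a) y) as [Ea|Na]; [exists a; split; [lra|exact Ea]|].
  destruct (Req_dec (f c) y) as [Ec|Nc]; [exists c; split; [lra|exact Ec]|].
  assert (hac' : a < c) by (destruct (Req_dec a c); [subst; lra|lra]).
  destruct (Ranalysis5.IVT_interv (fun x => f x - y) a c) as [x [hx Ex]];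
    [|lra|lra|lra|exists x; split; [exact hx|lra]].
  intros x hx. apply derivable_continuous_pt.
  apply (Ranalysis1.derivable_pt_minus _ (fun _ => y)); [|apply derivable_pt_const].
  exists (f' x). apply is_derive_Reals, Df, hx.
Qed.

Lemma exp_le_exp_of_le x y : x <= y -> exp x <= exp y.
Proof. intros [h| ->]; [left; apply exp_increasing; exact h|lra]. Qed.

(* [tanh z <= z] *)
Lemma one_sub_mul_exp_le (z : R) : 0 <= z -> (1 - z) * exp z <= (1 + z) * exp (- z).
Proof.
  intros hz.
  set (h := fun z => (1 + z) * exp (- z) - (1 - z) * exp z).
  assert (H : h 0 <= h z).
  { apply (incr_of_derive h (fun z => z * (exp z - exp (- z))) 0 z); try lra.
    - intros x _. unfold h. auto_derive; [easy|]. ring.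
    - intros x hx. apply Rmult_le_pos; [lra|].
      assert (exp (- x) <= exp x) by (apply exp_le_exp_of_le; lra). lra. }
  unfold h in H. rewrite Ropp_0, exp_0 in H. lra.
Qed.

Section BinaryMIM.

Variable w : R.

Definition mimb t := t * exp (w * (1 - t)) + (1 - t) * exp (w * t).
Definition mimb_d1 t :=
  exp (w * (1 - t)) - w * t * exp (w * (1 - t)) - exp (w * t) + w * (1 - t) * exp (w * t).
Definition mimb_curv t :=
  w * (exp (w * (1 - t)) * (2 - w * t) + exp (w * t) * (2 - w * (1 - t))).
Definition mimb_curv_d1 t :=
  w ^ 2 * (exp (w * t) * (3 - w * (1 - t)) - exp (w * (1 - t)) * (3 - w * t)).

Lemma is_derive_mimb t : is_derive mimb t (mimb_d1 t).
Proof. unfold mimb, mimb_d1. auto_derive; [easy|]. unfold Rminus; ring. Qed.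

Lemma is_derive_mimb_d1 t : is_derive mimb_d1 t (- mimb_curv t).
Proof. unfold mimb_d1, mimb_curv. auto_derive; [easy|]. unfold Rminus; ring. Qed.

Lemma is_derive_mimb_curv t : is_derive mimb_curv t (mimb_curv_d1 t).
Proof. unfold mimb_curv, mimb_curv_d1. auto_derive; [easy|]. unfold Rminus; ring. Qed.

Lemma Derive_mimb t : Derive mimb t = mimb_d1 t.
Proof. apply is_derive_unique, is_derive_mimb. Qed.

Lemma Derive_mimb_d1 t : Derive mimb_d1 t = - mimb_curv t.
Proof. apply is_derive_unique, is_derive_mimb_d1. Qed.

Lemma mimb_0 : mimb 0 = 1.
Proof. unfold mimb. rewrite Rmult_0_r, exp_0, Rminus_0_r, Rmult_1_r. ring. Qed.

Lemma mimb_1 : mimb 1 = 1.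
Proof. unfold mimb. rewrite Rminus_diag, Rmult_0_r, exp_0. ring. Qed.

Lemma mimb_half : mimb (1/2) = exp (w / 2).
Proof.
  unfold mimb. replace (w * (1 - 1/2)) with (w / 2) by field.
  replace (w * (1/2)) with (w / 2) by field. field.
Qed.

Lemma mimb_d1_half : mimb_d1 (1/2) = 0.
Proof. unfold mimb_d1. replace (1 - 1/2) with (1/2) by field. ring. Qed.

Lemma mimb_curv_sym t : mimb_curv (1 - t) = mimb_curv t.
Proof. unfold mimb_curv. replace (1 - (1 - t)) with t by ring. ring. Qed.

Hypothesis w_range : 0 < w < 2.

Lemma mimb_curv_pos t : 0 <= t <= 1 -> 0 < mimb_curv t.
Proof.
  intros ht. unfold mimb_curv.
  assert (0 < exp (w * (1 - t))) by apply exp_pos.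
  assert (0 < exp (w * t)) by apply exp_pos.
  assert (0 < 2 - w * t) by nra. assert (0 < 2 - w * (1 - t)) by nra.
  apply Rmult_lt_0_compat; [lra|nra].
Qed.

(* Strict concavity makes [mimb] increase up to its critical point [1/2]. *)
Lemma mimb_strict_incr x y : 0 <= x -> x < y -> y <= 1/2 -> mimb x < mimb y.
Proof.
  apply (strict_incr_of_derive mimb mimb_d1 0 (1/2)); [intros; apply is_derive_mimb|].
  intros t ht.
  assert (H : - mimb_d1 t < - mimb_d1 (1/2)).
  { apply (strict_incr_of_derive (fun t => - mimb_d1 t) mimb_curv 0 (1/2)); try lra.
    - intros u _. rewrite <- (Ropp_involutive (mimb_curv u)).
      apply (is_derive_opp mimb_d1), is_derive_mimb_d1.
    - intros u hu. apply mimb_curv_pos; lra. }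
  rewrite mimb_d1_half in H. lra.
Qed.

End BinaryMIM.

Definition py1 p b := p * (1 - b) + (1 - p) * b.

(* Where [py1 p b] or [1 - py1 p b] vanishes, the junk value of the division is harmless:
   the corresponding term carries that factor. *)
Definition bsc_leak w b p :=
  mimb w p - py1 p b * mimb w (p * (1 - b) / py1 p b)
  - (1 - py1 p b) * mimb w (p * b / (1 - py1 p b)).

Lemma py1_range p b : 0 <= p <= 1 -> 0 < b < 1 -> 0 < py1 p b < 1.
Proof. intros hp hb. unfold py1. split; nra. Qed.

Lemma mim_term_pair w x y : x + y = 1 -> mim_term w x + mim_term w y = mimb w x.
Proof.
  intros h. replace y with (1 - x) by lra. unfold mim_term, mimb.
  replace (1 - (1 - x)) with x by ring. ring.
Qed.

Lemma MIM_eq_mimb w p : MIM w p = mimb w p.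
Proof. apply mim_term_pair. simpl. ring. Qed.

Lemma py_true p b : py p b true = py1 p b.
Proof. unfold py, px, bsc, py1. simpl. ring. Qed.

Lemma py_false p b : py p b false = 1 - py1 p b.
Proof. unfold py, px, bsc, py1. simpl. ring. Qed.

Lemma CMIM_term_true w p b : 0 <= py1 p b ->
  CMIM_term w p b true = py1 p b * mimb w (p * (1 - b) / py1 p b).
Proof.
  intros hq. unfold CMIM_term, pxy. rewrite py_true. cbn [px bsc Bool.eqb].
  destruct (Rlt_dec 0 (py1 p b)) as [h|h].
  - rewrite mim_term_pair; [reflexivity|]. unfold py1 in *. field. lra.
  - replace (py1 p b) with 0 by lra. ring.
Qed.

Lemma CMIM_term_false w p b : 0 <= 1 - py1 p b ->
  CMIM_term w p b false = (1 - py1 p b) * mimb w (p * b / (1 - py1 p b)).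
Proof.
  intros hq. unfold CMIM_term, pxy. rewrite py_false. cbn [px bsc Bool.eqb].
  destruct (Rlt_dec 0 (1 - py1 p b)) as [h|h].
  - rewrite mim_term_pair; [reflexivity|]. unfold py1 in *. field. lra.
  - replace (1 - py1 p b) with 0 by lra. ring.
Qed.

Lemma leak_eq_bsc_leak w p b : 0 <= p <= 1 -> 0 <= b <= 1 -> leak w p b = bsc_leak w b p.
Proof.
  intros hp hb. assert (0 <= py1 p b <= 1) by (unfold py1; nra).
  unfold leak, CMIM. rewrite MIM_eq_mimb, CMIM_term_true, CMIM_term_false by lra.
  unfold bsc_leak. ring.
Qed.

Lemma bsc_leak_sym w b p : bsc_leak w (1 - b) p = bsc_leak w b p.
Proof.
  unfold bsc_leak. replace (py1 p (1 - b)) with (1 - py1 p b) by (unfold py1; ring).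
  replace (1 - (1 - b)) with b by ring. replace (1 - (1 - py1 p b)) with (py1 p b) by ring.
  ring.
Qed.

Lemma leak_sym w p b : 0 <= p <= 1 -> 0 <= b <= 1 -> leak w p (1 - b) = leak w p b.
Proof. intros hp hb. rewrite !leak_eq_bsc_leak by lra. apply bsc_leak_sym. Qed.

Lemma bsc_leak_0 w p : 0 <= p < 1 -> bsc_leak w 0 p = mimb w p - 1.
Proof.
  intros hp. unfold bsc_leak.
  replace (py1 p 0) with p by (unfold py1; ring).
  replace (p * 0 / (1 - p)) with 0 by (field; lra). rewrite mimb_0.
  destruct (Req_dec p 0) as [->|hp0].
  - ring.
  - replace (p * (1 - 0) / p) with 1 by (field; lra). rewrite mimb_1. ring.
Qed.

Lemma leak_zero w b : 0 <= b <= 1 -> leak w 0 b = 0.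
Proof.
  intros hb. rewrite leak_eq_bsc_leak by lra. unfold bsc_leak, Rdiv.
  rewrite !Rmult_0_l, mimb_0. ring.
Qed.

Lemma leak_half w b : 0 <= b <= 1 -> leak w (1/2) b = C_beta w b.
Proof.
  intros hb. rewrite leak_eq_bsc_leak by lra. unfold bsc_leak, C_beta.
  replace (py1 (1/2) b) with (1/2) by (unfold py1; field).
  replace (1/2 * (1 - b) / (1/2)) with (1 - b) by field.
  replace (1/2 * b / (1 - 1/2)) with b by field.
  rewrite mimb_half. unfold mimb. replace (1 - (1 - b)) with b by ring. field.
Qed.

Lemma C_beta_half w : C_beta w (1/2) = 0.
Proof.
  unfold C_beta. replace (w * (1 - 1/2)) with (w / 2) by field.
  replace (w * (1/2)) with (w / 2) by field. field.
Qed.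

Definition leak_slope w b p x y :=
  mimb_d1 w p - mimb_d1 w x * (1 - b - (1 - 2 * b) * x) - mimb_d1 w y * ((1 - 2 * b) * y + b)
  - (1 - 2 * b) * (mimb w x - mimb w y).

Lemma is_derive_bsc_leak w b p : 0 < py1 p b < 1 ->
  is_derive (bsc_leak w b) p
    (leak_slope w b p (p * (1 - b) / py1 p b) (p * b / (1 - py1 p b))).
Proof.
  intros hq. unfold bsc_leak, leak_slope, py1 in *. auto_derive.
  - repeat split;
    match goal with
    | |- ex_derive (fun x => mimb _ x) ?y => exact (ex_intro _ _ (is_derive_mimb _ y))
    | _ => lra
    end.
  - rewrite !Derive_mimb. unfold Rdiv, Rminus.
    set (g0 := mimb_d1 w p).
    set (g1 := mimb_d1 w (p * (1 + - b) * / (p * (1 + - b) + (1 + - p) * b))).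
    set (g2 := mimb_d1 w (p * b * / (1 + - (p * (1 + - b) + (1 + - p) * b)))).
    set (h1 := mimb w (p * (1 + - b) * / (p * (1 + - b) + (1 + - p) * b))).
    set (h2 := mimb w (p * b * / (1 + - (p * (1 + - b) + (1 + - p) * b)))).
    clearbody g0 g1 g2 h1 h2. field. lra.
Qed.

Definition curv_weight w t := mimb_curv w t ^ 2 * (t * (1 - t)) ^ 3.
Definition curv_weight_d1 w t :=
  mimb_curv w t * (t * (1 - t)) ^ 2
  * (2 * mimb_curv_d1 w t * (t * (1 - t)) + 3 * mimb_curv w t * (1 - 2 * t)).

Lemma is_derive_curv_weight w t : is_derive (curv_weight w) t (curv_weight_d1 w t).
Proof.
  unfold curv_weight. auto_derive; [exact (ex_intro _ _ (is_derive_mimb_curv w t))|].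
  replace (Derive (fun x => mimb_curv w x) t) with (mimb_curv_d1 w t)
    by (symmetry; apply is_derive_unique, is_derive_mimb_curv).
  unfold curv_weight_d1. ring.
Qed.

Lemma curv_weight_sym w t : curv_weight w (1 - t) = curv_weight w t.
Proof. unfold curv_weight. rewrite mimb_curv_sym. replace (1 - (1 - t)) with t by ring. ring. Qed.

(* The sign of [curv_weight_d1 w t], with [A = exp (w (1 - t))] and [B = exp (w t)].  In the
   variables [a = w/2], [v = 1 - 2t] the last hypothesis reads [tanh (a v) <= a v]. *)
Lemma curv_weight_d1_factor_pos (w t A B : R) : 0 < w < 2 -> 0 < t < 1/2 -> 0 < B -> B <= A ->
  A * (1 - w * (1 - 2 * t) / 2) <= B * (1 + w * (1 - 2 * t) / 2) ->
  0 < 3 * (1 - 2 * t) * (A * (2 - w * t) + B * (2 - w * (1 - t)))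
      + 2 * t * (1 - t) * w * (B * (3 - w * (1 - t)) - A * (3 - w * t)).
Proof.
  intros hw ht hB hBA hAB.
  replace (3 * (1 - 2 * t) * (A * (2 - w * t) + B * (2 - w * (1 - t)))
           + 2 * t * (1 - t) * w * (B * (3 - w * (1 - t)) - A * (3 - w * t)))
    with (2 * ((3 * (1 - 2 * t) * (2 - w / 2) - (w / 2) ^ 2 * (1 - 2 * t) * (1 - (1 - 2 * t) ^ 2))
                 * ((A + B) / 2)
               + (3 * (w / 2) * (1 - 2 * t) ^ 2 - (w / 2) * (1 - (1 - 2 * t) ^ 2) * (3 - w / 2))
                 * ((A - B) / 2)))
    by field.
  set (a := w / 2). set (v := 1 - 2 * t). set (C := (A + B) / 2). set (S := (A - B) / 2).
  assert (ha : 0 < a < 1) by (unfold a; lra).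
  assert (hv : 0 < v < 1) by (unfold v; lra).
  assert (hS : 0 <= S) by (unfold S; lra).
  assert (hC : 0 < C) by (unfold C; lra).
  assert (hSC : S <= a * v * C) by (unfold S, C, a, v; nra).
  clearbody a v C S.
  assert (0 < 3 * (2 - a) - a ^ 2 * (1 - v ^ 2)) by nra.
  destruct (Rle_dec 0 (3 * a * v ^ 2 - a * (1 - v ^ 2) * (3 - a))) as [h|h].
  - assert (0 <= (3 * a * v ^ 2 - a * (1 - v ^ 2) * (3 - a)) * S) by (apply Rmult_le_pos; lra).
    assert (0 < v * (3 * (2 - a) - a ^ 2 * (1 - v ^ 2)) * C)
      by (apply Rmult_lt_0_compat; [apply Rmult_lt_0_compat|]; lra).
    assert ((3 * v * (2 - a) - a ^ 2 * v * (1 - v ^ 2)) * C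
            = v * (3 * (2 - a) - a ^ 2 * (1 - v ^ 2)) * C) by ring.
    lra.
  - assert ((3 * a * v ^ 2 - a * (1 - v ^ 2) * (3 - a)) * S
            >= (3 * a * v ^ 2 - a * (1 - v ^ 2) * (3 - a)) * (a * v * C)) by nra.
    assert (0 < (1 - a) * (6 + 3 * a - a ^ 2)) by (apply Rmult_lt_0_compat; nra).
    assert (0 < v * C * (6 - 3 * a - a ^ 2 * (1 - v ^ 2) * (4 - a) + 3 * a ^ 2 * v ^ 2))
      by (apply Rmult_lt_0_compat; [apply Rmult_lt_0_compat|]; nra).
    assert ((3 * v * (2 - a) - a ^ 2 * v * (1 - v ^ 2)) * C
            + (3 * a * v ^ 2 - a * (1 - v ^ 2) * (3 - a)) * (a * v * C)
            = v * C * (6 - 3 * a - a ^ 2 * (1 - v ^ 2) * (4 - a) + 3 * a ^ 2 * v ^ 2)) by ring.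
    lra.
Qed.

Lemma curv_weight_d1_pos w t : 0 < w < 2 -> 0 < t < 1/2 -> 0 < curv_weight_d1 w t.
Proof.
  intros hw ht. unfold curv_weight_d1.
  assert (0 < mimb_curv w t) by (apply mimb_curv_pos; lra).
  assert (0 < (t * (1 - t)) ^ 2) by (apply pow_lt; nra).
  apply Rmult_lt_0_compat; [apply Rmult_lt_0_compat; lra|].
  set (A := exp (w * (1 - t))). set (B := exp (w * t)).
  assert (hBA : B <= A) by (apply exp_le_exp_of_le; nra).
  assert (hAB : A * (1 - w * (1 - 2 * t) / 2) <= B * (1 + w * (1 - 2 * t) / 2)).
  { assert (EA : A = exp (w / 2) * exp (w * (1 - 2 * t) / 2))
      by (unfold A; rewrite <- exp_plus; f_equal; field).
    assert (EB : B = exp (w / 2) * exp (- (w * (1 - 2 * t) / 2)))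
      by (unfold B; rewrite <- exp_plus; f_equal; field).
    assert (Ht := one_sub_mul_exp_le (w * (1 - 2 * t) / 2) ltac:(nra)).
    assert (0 < exp (w / 2)) by apply exp_pos.
    rewrite EA, EB. nra. }
  replace (2 * mimb_curv_d1 w t * (t * (1 - t)) + 3 * mimb_curv w t * (1 - 2 * t))
    with (w * (3 * (1 - 2 * t) * (A * (2 - w * t) + B * (2 - w * (1 - t)))
               + 2 * t * (1 - t) * w * (B * (3 - w * (1 - t)) - A * (3 - w * t))))
    by (unfold mimb_curv, mimb_curv_d1, A, B; ring).
  apply Rmult_lt_0_compat; [lra|].
  apply curv_weight_d1_factor_pos; try lra. apply exp_pos.
Qed.

Lemma curv_weight_strict_incr w x y : 0 < w < 2 -> 0 <= x -> x < y -> y <= 1/2 ->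
  curv_weight w x < curv_weight w y.
Proof.
  intros hw. apply (strict_incr_of_derive (curv_weight w) (curv_weight_d1 w) 0 (1/2)).
  - intros; apply is_derive_curv_weight.
  - intros; apply curv_weight_d1_pos; lra.
Qed.

Lemma curv_weight_lt w x y : 0 < w < 2 -> 0 <= y -> y < x -> y < 1 - x ->
  curv_weight w y < curv_weight w x.
Proof.
  intros hw hy hyx hyx'. destruct (Rle_dec x (1/2)) as [h|h].
  - apply curv_weight_strict_incr; lra.
  - rewrite <- (curv_weight_sym w x). apply curv_weight_strict_incr; lra.
Qed.

(* Bayes: the posterior of [x_1] under the prior [p] after evidence of likelihood ratio [r]. *)
Definition posterior p r := p * r / (p * r + (1 - p)).

Lemma posterior_inv p m : 0 < p < 1 -> 0 < m -> posterior p (/ m) = p / (p + (1 - p) * m).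
Proof. intros hp hm. unfold posterior. field. split; nra. Qed.

Lemma posterior_range p r : 0 < p < 1 -> 0 < r -> 0 < posterior p r < 1.
Proof.
  intros hp hr. unfold posterior. assert (0 < p * r) by nra. split.
  - apply Rdiv_lt_0_compat; lra.
  - apply Rmult_lt_reg_r with (p * r + (1 - p)); [lra|]. field_simplify; lra.
Qed.

Definition leak_slope_path_d1 w b p m :=
  mimb_curv w (posterior p m) * (1 - b - (1 - 2 * b) * posterior p m)
    * (p * (1 - p) / (p * m + (1 - p)) ^ 2)
  - mimb_curv w (posterior p (/ m)) * ((1 - 2 * b) * posterior p (/ m) + b)
    * (p * (1 - p) / (p + (1 - p) * m) ^ 2).

Lemma is_derive_leak_slope_path w b p m : 0 < p < 1 -> 0 < m ->
  is_derive (fun m => leak_slope w b p (posterior p m) (posterior p (/ m))) m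
    (leak_slope_path_d1 w b p m).
Proof.
  intros hp hm.
  assert (0 < p * m + (1 - p)) by nra.
  assert (0 < p * / m + (1 - p)) by (assert (0 < / m) by (apply Rinv_0_lt_compat; lra); nra).
  unfold leak_slope, posterior. auto_derive.
  - repeat split;
    match goal with
    | |- ex_derive (fun x => mimb_d1 _ x) ?y => exact (ex_intro _ _ (is_derive_mimb_d1 _ y))
    | |- ex_derive (fun x => mimb _ x) ?y => exact (ex_intro _ _ (is_derive_mimb _ y))
    | _ => lra
    end.
  - rewrite !Derive_mimb_d1, !Derive_mimb. unfold leak_slope_path_d1, posterior, Rdiv.
    set (k1 := mimb_curv w (p * m * / (p * m + (1 - p)))).
    set (k2 := mimb_curv w (p * / m * / (p * / m + (1 - p)))).
    set (g1 := mimb_d1 w (p * m * / (p * m + (1 - p)))).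
    set (g2 := mimb_d1 w (p * / m * / (p * / m + (1 - p)))).
    clearbody k1 k2 g1 g2. field. repeat split; nra.
Qed.

(* Both posteriors satisfy [x (1 - x) = p (1 - p) m / D^2] for their own denominator [D], so
   this is [curv_weight] at [posterior p (/ m)] below [curv_weight] at [posterior p m]. *)
Lemma mimb_curv_posterior_lt w p m : 0 < w < 2 -> 0 < p < 1/2 -> 1 < m ->
  mimb_curv w (posterior p (/ m)) * (p * m + (1 - p)) ^ 3
  < mimb_curv w (posterior p m) * (p + (1 - p) * m) ^ 3.
Proof.
  intros hw hp hm.
  set (D1 := p * m + (1 - p)). set (D2 := p + (1 - p) * m).
  assert (hD1 : 0 < D1) by (unfold D1; nra). assert (hD2 : 0 < D2) by (unfold D2; nra).
  assert (EX : posterior p m = p * m / D1) by reflexivity.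
  assert (EY : posterior p (/ m) = p / D2) by (apply posterior_inv; lra).
  set (x := posterior p m) in *. set (y := posterior p (/ m)) in *.
  assert (hy : 0 < y) by (rewrite EY; apply Rdiv_lt_0_compat; lra).
  assert (hyx : y < x).
  { assert (E : x - y = p * (1 - p) * (m ^ 2 - 1) / (D1 * D2))
      by (rewrite EX, EY; unfold D1, D2 in *; field; lra).
    assert (0 < p * (1 - p) * (m ^ 2 - 1) / (D1 * D2))
      by (apply Rdiv_lt_0_compat; [apply Rmult_lt_0_compat|]; nra).
    lra. }
  assert (hyx' : y < 1 - x).
  { assert (E : 1 - x - y = m * (1 - 2 * p) / (D1 * D2))
      by (rewrite EX, EY; unfold D1, D2 in *; field; lra).
    assert (0 < m * (1 - 2 * p) / (D1 * D2)) by (apply Rdiv_lt_0_compat; nra).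
    lra. }
  assert (HW := curv_weight_lt w x y hw ltac:(lra) hyx hyx'). unfold curv_weight in HW.
  set (c := p * (1 - p) * m).
  assert (hc : 0 < c) by (unfold c; apply Rmult_lt_0_compat; nra).
  assert (Ex : x * (1 - x) = c / D1 ^ 2) by (rewrite EX; unfold c, D1 in *; field; lra).
  assert (Ey : y * (1 - y) = c / D2 ^ 2) by (rewrite EY; unfold c, D2 in *; field; lra).
  rewrite Ex, Ey in HW.
  assert (hkx : 0 < mimb_curv w x) by (apply mimb_curv_pos; lra).
  assert (hky : 0 < mimb_curv w y) by (apply mimb_curv_pos; lra).
  apply Rsqr_incrst_0.
  - unfold Rsqr.
    replace ((mimb_curv w y * D1 ^ 3) * (mimb_curv w y * D1 ^ 3))
      with (mimb_curv w y ^ 2 * (c / D2 ^ 2) ^ 3 * (D1 ^ 6 * D2 ^ 6 / c ^ 3)) by (field; lra).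
    replace ((mimb_curv w x * D2 ^ 3) * (mimb_curv w x * D2 ^ 3))
      with (mimb_curv w x ^ 2 * (c / D1 ^ 2) ^ 3 * (D1 ^ 6 * D2 ^ 6 / c ^ 3)) by (field; lra).
    apply Rmult_lt_compat_r; [|exact HW].
    apply Rdiv_lt_0_compat; [apply Rmult_lt_0_compat|]; apply pow_lt; lra.
  - apply Rmult_le_pos; [lra|]. apply pow_le; lra.
  - apply Rmult_le_pos; [lra|]. apply pow_le; lra.
Qed.

Lemma leak_slope_path_d1_pos w b p m : 0 < w < 2 -> 0 < b < 1/2 -> 0 < p < 1/2 ->
  1 < m -> b * m <= 1 - b -> 0 < leak_slope_path_d1 w b p m.
Proof.
  intros hw hb hp hm hbm.
  assert (Hk := mimb_curv_posterior_lt w p m hw hp hm).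
  set (D1 := p * m + (1 - p)) in *. set (D2 := p + (1 - p) * m) in *.
  assert (hD1 : 0 < D1) by (unfold D1; nra). assert (hD2 : 0 < D2) by (unfold D2; nra).
  set (U1 := (1 - b) * (1 - p) + b * p * m). set (U2 := (1 - b) * p + b * (1 - p) * m).
  assert (hU2 : 0 < U2) by (unfold U2; nra).
  assert (hU12 : U2 <= U1).
  { assert (0 <= (1 - 2 * p) * (1 - b - b * m)) by (apply Rmult_le_pos; lra).
    unfold U1, U2. nra. }
  assert (EU1 : 1 - b - (1 - 2 * b) * posterior p m = U1 / D1)
    by (unfold posterior; unfold U1, D1 in *; field; lra).
  assert (EU2 : (1 - 2 * b) * posterior p (/ m) + b = U2 / D2)
    by (rewrite posterior_inv by lra; unfold U2, D2 in *; field; lra).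
  unfold leak_slope_path_d1. fold D1 D2. rewrite EU1, EU2.
  assert (0 < mimb_curv w (posterior p (/ m))).
  { apply mimb_curv_pos; [lra|]. assert (0 < / m) by (apply Rinv_0_lt_compat; lra).
    assert (Hr := posterior_range p (/ m) ltac:(lra) ltac:(lra)). lra. }
  set (kx := mimb_curv w (posterior p m)) in *.
  set (ky := mimb_curv w (posterior p (/ m))) in *.
  replace (kx * (U1 / D1) * (p * (1 - p) / D1 ^ 2) - ky * (U2 / D2) * (p * (1 - p) / D2 ^ 2))
    with ((kx * D2 ^ 3 * U1 - ky * D1 ^ 3 * U2) * (p * (1 - p) / (D1 ^ 3 * D2 ^ 3)))
    by (field; lra).
  apply Rmult_lt_0_compat.
  - assert (ky * D1 ^ 3 * U2 <= ky * D1 ^ 3 * U1).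
    { apply Rmult_le_compat_l; [|lra]. apply Rmult_le_pos; [lra|]. apply pow_le; lra. }
    assert (ky * D1 ^ 3 * U1 < kx * D2 ^ 3 * U1) by (apply Rmult_lt_compat_r; lra).
    lra.
  - apply Rdiv_lt_0_compat; [nra|]. apply Rmult_lt_0_compat; apply pow_lt; lra.
Qed.

(* The slope vanishes at [x = y = p], and the posteriors at which [bsc_leak] is evaluated are
   [posterior p m], [posterior p (/ m)] for [m = (1 - b) / b]. *)
Lemma leak_slope_pos w b p : 0 < w < 2 -> 0 < b < 1/2 -> 0 < p < 1/2 ->
  0 < leak_slope w b p (p * (1 - b) / py1 p b) (p * b / (1 - py1 p b)).
Proof.
  intros hw hb hp.
  set (r := (1 - b) / b).
  assert (hr : 1 < r) by (unfold r; apply Rmult_lt_reg_r with b; [lra|]; field_simplify; lra).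
  assert (H : leak_slope w b p (posterior p 1) (posterior p (/ 1))
              < leak_slope w b p (posterior p r) (posterior p (/ r))).
  { apply (strict_incr_of_derive (fun m => leak_slope w b p (posterior p m) (posterior p (/ m)))
             (leak_slope_path_d1 w b p) 1 r); try lra.
    - intros m hm. apply is_derive_leak_slope_path; lra.
    - intros m hm. apply leak_slope_path_d1_pos; try lra.
      apply Rmult_le_reg_r with (/ b); [apply Rinv_0_lt_compat; lra|].
      unfold r in hm. field_simplify; lra. }
  assert (hq := py1_range p b ltac:(lra) ltac:(lra)).
  replace (posterior p 1) with p in H by (unfold posterior; field; lra).
  replace (posterior p (/ 1)) with p in H by (unfold posterior; field; lra).
  replace (posterior p r) with (p * (1 - b) / py1 p b) in H
    by (unfold posterior, r, py1 in *; field; lra).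
  replace (posterior p (/ r)) with (p * b / (1 - py1 p b)) in H
    by (unfold posterior, r, py1 in *; field; lra).
  replace (leak_slope w b p p p) with 0 in H by (unfold leak_slope; ring).
  exact H.
Qed.

Lemma bsc_leak_strict_incr w b x y : 0 < w < 2 -> 0 < b < 1/2 ->
  0 <= x -> x < y -> y <= 1/2 -> bsc_leak w b x < bsc_leak w b y.
Proof.
  intros hw hb.
  apply (strict_incr_of_derive (bsc_leak w b)
           (fun p => leak_slope w b p (p * (1 - b) / py1 p b) (p * b / (1 - py1 p b))) 0 (1/2)).
  - intros p hp. apply is_derive_bsc_leak, py1_range; lra.
  - intros p hp. apply leak_slope_pos; lra.
Qed.

Lemma leak_strict_incr w b x y : 0 < w < 2 -> 0 <= b <= 1 -> b <> 1/2 ->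
  0 <= x -> x < y -> y <= 1/2 -> leak w x b < leak w y b.
Proof.
  intros hw hb hb2 hx hxy hy.
  assert (Hlow : forall b, 0 <= b < 1/2 -> leak w x b < leak w y b).
  { clear b hb hb2. intros b hb. rewrite !leak_eq_bsc_leak by lra.
    destruct (Req_dec b 0) as [->|hb0].
    - rewrite !bsc_leak_0 by lra.
      assert (mimb w x < mimb w y) by (apply mimb_strict_incr; lra). lra.
    - apply bsc_leak_strict_incr; lra. }
  destruct (Rlt_le_dec b (1/2)) as [h|h]; [apply Hlow; lra|].
  rewrite <- (leak_sym w x b), <- (leak_sym w y b) by lra. apply Hlow; lra.
Qed.

Lemma leak_ivt w b eps : 0 <= b <= 1 -> 0 <= eps <= C_beta w b ->
  exists ps, 0 <= ps <= 1/2 /\ leak w ps b = eps.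
Proof.
  intros hb he. revert b eps hb he.
  assert (Hlow : forall b eps, 0 <= b <= 1/2 -> 0 <= eps <= C_beta w b ->
                   exists ps, 0 <= ps <= 1/2 /\ leak w ps b = eps).
  { intros b eps hb he.
    rewrite <- (leak_zero w b), <- (leak_half w b) in he by lra.
    rewrite !leak_eq_bsc_leak in he by lra.
    destruct (Req_dec b 0) as [->|hb0].
    - rewrite !bsc_leak_0 in he by lra.
      destruct (ivt_of_derive (mimb w) (mimb_d1 w) 0 (1/2) (eps + 1)) as [ps [hps E]];
        [lra|intros; apply is_derive_mimb|lra|].
      exists ps. split; [exact hps|]. rewrite leak_eq_bsc_leak, bsc_leak_0 by lra. lra.
    - destruct (ivt_of_derive (bsc_leak w b)
                  (fun p => leak_slope w b p (p * (1 - b) / py1 p b) (p * b / (1 - py1 p b)))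
                  0 (1/2) eps) as [ps [hps E]]; [lra| |exact he|].
      + intros p hp. apply is_derive_bsc_leak, py1_range; lra.
      + exists ps. split; [exact hps|]. rewrite leak_eq_bsc_leak by lra. exact E. }
  intros b eps hb he. destruct (Rle_lt_dec b (1/2)) as [h|h]; [apply Hlow; lra|].
  destruct (Hlow (1 - b) eps) as [ps [hps E]]; [lra| |].
  - unfold C_beta in *. replace (1 - (1 - b)) with b by ring. lra.
  - exists ps. split; [exact hps|]. rewrite <- leak_sym by lra. exact E.
Qed.

Lemma ln2_pos : 0 < ln 2.
Proof. assert (H := ln_lt_2). lra. Qed.

Lemma ln_nonpos x : 0 < x <= 1 -> ln x <= 0.
Proof.
  intros [h0 [h1| ->]]; [|rewrite ln_1; lra].
  rewrite <- ln_1. left. apply ln_increasing; lra.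
Qed.

(* A vanishing joint probability makes the term vanish whatever the junk value of the log. *)
Lemma MI_term_split A c y : 0 <= A -> 0 <= c -> A * c <= y ->
  A * c * log2 (c / y) = A * c * log2 c - A * c * log2 y.
Proof.
  intros hA hc hy. destruct (Req_dec (A * c) 0) as [E|E]; [rewrite E; ring|].
  assert (0 < A * c) by (destruct (Rmult_le_pos A c hA hc); [assumption|congruence]).
  assert (0 < c) by (destruct hc as [hc|<-]; [exact hc|now rewrite Rmult_0_r in E]).
  unfold log2. rewrite ln_div by lra. field. apply Rgt_not_eq, ln2_pos.
Qed.

Lemma MI_formula p b : 0 <= p <= 1 -> 0 <= b <= 1 -> MI p b = Hb (py1 p b) - Hb b.
Proof.
  intros hp hb. unfold MI, MI_term.
  assert (Hpx : forall x, 0 <= px p x) by (intros []; unfold px; lra).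
  assert (Hbsc : forall x y, 0 <= bsc b x y) by (intros [] []; unfold bsc; simpl; lra).
  assert (Hpy : forall x y, px p x * bsc b x y <= py p b y)
    by (intros [] []; unfold py, px, bsc; simpl; nra).
  rewrite !MI_term_split by (apply Hpx || apply Hbsc || apply Hpy).
  rewrite py_true, py_false. unfold Hb. cbn [px bsc Bool.eqb]. unfold py1. ring.
Qed.

Lemma Hb_sym x : Hb (1 - x) = Hb x.
Proof. unfold Hb. replace (1 - (1 - x)) with x by ring. ring. Qed.

Lemma Hb_half : Hb (1/2) = 1.
Proof.
  unfold Hb, log2. replace (1 - 1/2) with (/ 2) by field. replace (1/2) with (/ 2) by field.
  rewrite ln_Rinv by lra. field. apply Rgt_not_eq, ln2_pos.
Qed.

Lemma Hb_incr x y : 0 <= x -> x <= y -> y <= 1/2 -> Hb x <= Hb y.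
Proof.
  intros hx hxy hy. assert (L := ln2_pos).
  destruct (Req_dec x 0) as [->|hx0].
  - destruct (Req_dec y 0) as [->|hy0]; [lra|].
    unfold Hb, log2. rewrite Rminus_0_r, ln_1.
    assert (ln y <= 0) by (apply ln_nonpos; lra).
    assert (ln (1 - y) <= 0) by (apply ln_nonpos; lra).
    unfold Rdiv. assert (0 < / ln 2) by (apply Rinv_0_lt_compat; lra).
    assert (0 <= - y * ln y * / ln 2) by (apply Rmult_le_pos; nra).
    assert (0 <= - (1 - y) * ln (1 - y) * / ln 2) by (apply Rmult_le_pos; nra).
    nra.
  - apply (incr_of_derive Hb (fun t => (ln (1 - t) - ln t) / ln 2) x (1/2)); try lra.
    + intros t ht. unfold Hb, log2. auto_derive.
      * repeat split; lra.
      * unfold Rminus. field. lra.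
    + intros t ht. apply Rmult_le_pos; [|left; apply Rinv_0_lt_compat, ln2_pos].
      assert (ln t < ln (1 - t)) by (apply ln_increasing; lra). lra.
Qed.

Lemma Hb_le_1 x : 0 <= x <= 1 -> Hb x <= 1.
Proof.
  intros hx. rewrite <- Hb_half. destruct (Rle_dec x (1/2)).
  - apply Hb_incr; lra.
  - rewrite <- Hb_sym. apply Hb_incr; lra.
Qed.

Lemma MI_sym p b : 0 <= p <= 1 -> 0 <= b <= 1 -> MI p (1 - b) = MI p b.
Proof.
  intros hp hb. rewrite !MI_formula by lra.
  replace (py1 p (1 - b)) with (1 - py1 p b) by (unfold py1; ring). rewrite !Hb_sym. reflexivity.
Qed.

Lemma MI_half b : 0 <= b <= 1 -> MI (1/2) b = 1 - Hb b.
Proof.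
  intros hb. rewrite MI_formula by lra.
  replace (py1 (1/2) b) with (1/2) by (unfold py1; field). rewrite Hb_half. reflexivity.
Qed.

Lemma MI_le_capacity p b : 0 <= p <= 1 -> 0 <= b <= 1 -> MI p b <= 1 - Hb b.
Proof.
  intros hp hb. rewrite MI_formula by lra.
  assert (Hb (py1 p b) <= 1) by (apply Hb_le_1; unfold py1; nra). lra.
Qed.

Lemma MI_incr p q b : 0 <= p -> p <= q -> q <= 1/2 -> 0 <= b <= 1 -> MI p b <= MI q b.
Proof.
  intros hp hpq hq hb.
  assert (Hlow : forall b, 0 <= b <= 1/2 -> MI p b <= MI q b).
  { clear b hb. intros b hb. rewrite !MI_formula by lra.
    assert (Hb (py1 p b) <= Hb (py1 q b)) by (apply Hb_incr; unfold py1; nra). lra. }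
  destruct (Rle_lt_dec b (1/2)) as [h|h]; [apply Hlow; lra|].
  rewrite <- (MI_sym p b), <- (MI_sym q b) by lra. apply Hlow; lra.
Qed.

Theorem proposition5 (w b eps : R) :
  0 < w < 2 -> 0 <= b <= 1 -> 0 < eps ->
  (C_beta w b <= eps -> is_opt_value w b eps (1 - Hb b)) /\
  (eps <= C_beta w b ->
     (exists ps, 0 <= ps <= 1/2 /\ leak w ps b = eps) /\
     (forall ps, 0 <= ps <= 1/2 -> leak w ps b = eps ->
        is_opt_value w b eps (Hb (ps * (1 - b) + (1 - ps) * b) - Hb b))).
Proof.
  intros hw hb he. split.
  - intros hC. split.
    + exists (1/2). rewrite leak_half, MI_half by lra. repeat split; lra.
    + intros p hp _. apply MI_le_capacity; lra.
  - intros hC.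
    assert (hb2 : b <> 1/2) by (intros ->; rewrite C_beta_half in hC; lra).
    split; [apply leak_ivt; lra|].
    intros ps hps hleak.
    replace (Hb (ps * (1 - b) + (1 - ps) * b) - Hb b) with (MI ps b) by (apply MI_formula; lra).
    split.
    + exists ps. repeat split; lra.
    + intros p hp hp_leak. apply MI_incr; try lra.
      destruct (Rle_lt_dec p ps) as [|hlt]; [lra|].
      assert (leak w ps b < leak w p b) by (apply leak_strict_incr; lra). lra.
Qed.
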